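(* Let $(\Omega,+)$ be a group and let $a,b$ be subgroups of $\Omega$. Then the power set $\mathcal{P}$ of $\Omega$, and also its subset $\mathcal{P}^o$, are semitorsors under each of the following four ternary compositions: $(x,y,z)\mapsto (xyz)_{ab}:=\Gamma(x,a,y,b,z)$; $(x,y,z)\mapsto \check\Gamma(x,a,y,b,z)$; $(x,y,z)\mapsto (xyz)_b:=\Sigma(b,x,y,z)$; $(x,y,z)\mapsto \check\Sigma(b,x,y,z)$.
   Context: $(\Omega,+)$ is a group written additively but not necessarily abelian, with neutral element $o$. $\mathcal{P}$ is the set of all subsets of $\Omega$ and $\mathcal{P}^o$ the set of subsets containing $o$. For $x,a,y,b,z\in\mathcal{P}$: $\Gamma(x,a,y,b,z)=\{\omega\in\Omega:\exists\alpha\in a,\exists\beta\in b:\ \alpha+\omega+\beta\in y,\ \alpha+\omega\in z,\ \omega+\beta\in x\}$; $\check\Gamma(x,a,y,b,z)=\{\omega\in\Omega:\exists\alpha\in a,\exists\beta\in b:\ \beta+\omega+\alpha\in y,\ \omega+\alpha\in z,\ \beta+\omega\in x\}$; $\Sigma(b,x,y,z)=\{\omega\in\Omega:\exists\beta,\beta'\in b:\ \omega+\beta\in x,\ \omega+\beta'+\beta\in y,\ \omega+\beta'\in z\}$; $\check\Sigma(b,x,y,z)=\{\omega\in\Omega:\exists\beta,\beta'\in b:\ \beta+\omega\in x,\ \beta+\beta'+\omega\in y,\ \beta'+\omega\in z\}$. A semitorsor is a set $G$ with a map $G^3\to G$, $(x,y,z)\mapsto(xyz)$, satisfying the para-associative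 law $(xy(zuv))=(x(uzy)v)=((xyz)uv)$ for all $x,y,z,u,v\in G$. *)

Set Implicit Arguments.
(* Subsets of Omega are predicates Omega -> Prop; set equality
   is Leibniz equality (propositional/functional extensionality are allowed). *)

Record is_group (G : Type) (add : G -> G -> G) (opp : G -> G) (o : G) : Prop := {
  grp_assoc : forall x y z, add x (add y z) = add (add x y) z;
  grp_add0l : forall x, add o x = x;
  grp_add0r : forall x, add x o = x;
  grp_addNl : forall x, add (opp x) x = o;
  grp_addNr : forall x, add x (opp x) = o }.

Record is_subgroup (G : Type) (add : G -> G -> G) (opp : G -> G) (o : G)
  (a : G -> Prop) : Prop := {
  sg_0 : a o;
  sg_add : forall x y, a x -> a y -> a (add x y);
  sg_opp : forall x, a x -> a (opp x) }.

Section Ops.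
Variables (G : Type) (add : G -> G -> G).

Definition Gamma (x a y b z : G -> Prop) : G -> Prop := fun w =>
  exists al be, a al /\ b be /\ y (add (add al w) be) /\ z (add al w) /\ x (add w be).

Definition Gammac (x a y b z : G -> Prop) : G -> Prop := fun w =>
  exists al be, a al /\ b be /\ y (add (add be w) al) /\ z (add w al) /\ x (add be w).

Definition Sigma (b x y z : G -> Prop) : G -> Prop := fun w =>
  exists be be', b be /\ b be' /\ x (add w be) /\ y (add (add w be') be) /\ z (add w be').

Definition Sigmac (b x y z : G -> Prop) : G -> Prop := fun w =>
  exists be be', b be /\ b be' /\ x (add be w) /\ y (add (add be be') w) /\ z (add be' w).
End Ops.

Definition semitorsor_on (T : Type) (S : T -> Prop) (m : T -> T -> T -> T) : Prop :=
  (forall x y z, S x -> S y -> S z -> S (m x y z)) /\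
  (forall x y z u v, S x -> S y -> S z -> S u -> S v ->
     m x y (m z u v) = m x (m u z y) v /\ m x (m u z y) v = m (m x y z) u v).

Definition allP (G : Type) : (G -> Prop) -> Prop := fun _ => True.
Definition Po (G : Type) (o : G) : (G -> Prop) -> Prop := fun x => x o.

(* Each side of the para-associative law, applied to [Gamma] (resp. [Sigma]),
   is the set of [w] admitting a "chain" of four subgroup elements that
   connects [w] to [x, y, z, u, v] in turn; the three identities are checked
   pointwise by an explicit change of these witnesses.  The checked
   compositions are [Gamma] and [Sigma] for the opposite group, in which
   [a] and [b] are still subgroups. *)

From Stdlib Require Import FunctionalExtensionality PropExtensionality.

Set Implicit Arguments.

Lemma pred_ext (G : Type) (P Q : G -> Prop) : (forall w, P w <-> Q w) -> P = Q.
Proof.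
  intro PQ; apply functional_extensionality; intro w.
  apply propositional_extensionality, PQ.
Qed.

Lemma mem_eq (G : Type) (P : G -> Prop) (s t : G) : P s -> s = t -> P t.
Proof. now intros Ps <-. Qed.
Arguments mem_eq {G P s t}.

Section GroupCompositions.
Variables (G : Type) (add : G -> G -> G) (opp : G -> G) (o : G).
Hypothesis HG : is_group add opp o.
Variables (a b : G -> Prop).
Hypothesis Ha : is_subgroup add opp o a.
Hypothesis Hb : is_subgroup add opp o b.

Local Notation "x + y" := (add x y).

Lemma addA_r x y z : x + y + z = x + (y + z).
Proof. symmetry; apply (grp_assoc HG). Qed.

Lemma addKl x y : opp x + (x + y) = y.
Proof. rewrite (grp_assoc HG), (grp_addNl HG); apply (grp_add0l HG). Qed.

Lemma addNKl x y : x + (opp x + y) = y.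
Proof. rewrite (grp_assoc HG), (grp_addNr HG); apply (grp_add0l HG). Qed.

Ltac group_simpl :=
  repeat rewrite ?addA_r, ?addKl, ?addNKl, ?(grp_addNl HG), ?(grp_addNr HG),
    ?(grp_add0l HG), ?(grp_add0r HG).

Ltac mem_by_group H := apply (mem_eq H); group_simpl; reflexivity.

Ltac in_subgroups :=
  repeat first [ assumption | apply (sg_0 Ha) | apply (sg_0 Hb)
               | apply (sg_add Ha) | apply (sg_add Hb)
               | apply (sg_opp Ha) | apply (sg_opp Hb) ].

Ltac close_memberships :=
  repeat split; in_subgroups;
  match goal with H : ?P _ |- ?P _ => mem_by_group H end.

Definition Gamma_chain x y z u v : G -> Prop := fun w => exists a1 a2 b1 b2,
  a a1 /\ a a2 /\ b b1 /\ b b2 /\ x (w + b1) /\ y (a1 + w + b1) /\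
  z (a1 + w + b2) /\ u (a2 + w + b2) /\ v (a2 + w).

Lemma Gamma_inner_r x y z u v :
  Gamma add x a y b (Gamma add z a u b v) = Gamma_chain x y z u v.
Proof.
  apply pred_ext; intro w; split.
  - intros (al & be & Hal & Hbe & Hy & (al' & be' & Hal' & Hbe' & Hu & Hv & Hz) & Hx).
    exists al, (al' + al), be, be'; close_memberships.
  - intros (a1 & a2 & b1 & b2 & Ha1 & Ha2 & Hb1 & Hb2 & Hx & Hy & Hz & Hu & Hv).
    exists a1, b1; repeat split; try close_memberships.
    exists (a2 + opp a1), b2; close_memberships.
Qed.

Lemma Gamma_inner_m x y z u v :
  Gamma add x a (Gamma add u a z b y) b v = Gamma_chain x y z u v.
Proof.
  apply pred_ext; intro w; split.
  - intros (al & be & Hal & Hbe & (al' & be' & Hal' & Hbe' & Hz & Hy & Hu) & Hv & Hx).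
    exists (al' + al), al, be, (be + be'); close_memberships.
  - intros (a1 & a2 & b1 & b2 & Ha1 & Ha2 & Hb1 & Hb2 & Hx & Hy & Hz & Hu & Hv).
    exists a2, b1; repeat split; try close_memberships.
    exists (a1 + opp a2), (opp b1 + b2); close_memberships.
Qed.

Lemma Gamma_inner_l x y z u v :
  Gamma add (Gamma add x a y b z) a u b v = Gamma_chain x y z u v.
Proof.
  apply pred_ext; intro w; split.
  - intros (al & be & Hal & Hbe & Hu & Hv & (al' & be' & Hal' & Hbe' & Hy & Hz & Hx)).
    exists al', al, (be + be'), be; close_memberships.
  - intros (a1 & a2 & b1 & b2 & Ha1 & Ha2 & Hb1 & Hb2 & Hx & Hy & Hz & Hu & Hv).
    exists a2, b2; repeat split; try close_memberships.
    exists a1, (opp b2 + b1); close_memberships.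
Qed.

Lemma Gamma_semitorsor S :
  (forall x y z, S x -> S y -> S z -> S (Gamma add x a y b z)) ->
  semitorsor_on S (fun x y z => Gamma add x a y b z).
Proof.
  intro S_closed; split; [exact S_closed|].
  intros; rewrite Gamma_inner_r, Gamma_inner_m, Gamma_inner_l; auto.
Qed.

Lemma Gamma_semitorsor_all : semitorsor_on (@allP G) (fun x y z => Gamma add x a y b z).
Proof. now apply Gamma_semitorsor. Qed.

Lemma Gamma_semitorsor_Po : semitorsor_on (Po o) (fun x y z => Gamma add x a y b z).
Proof.
  apply Gamma_semitorsor; unfold Po; intros x y z Hx Hy Hz.
  exists o, o; close_memberships.
Qed.

Definition Sigma_chain x y z u v : G -> Prop := fun w => exists b1 b2 b3 b4,
  b b1 /\ b b2 /\ b b3 /\ b b4 /\ x (w + b1) /\ y (w + b2 + b1) /\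
  z (w + b2 + b3) /\ u (w + b4 + b3) /\ v (w + b4).

Lemma Sigma_inner_r x y z u v :
  Sigma add b x y (Sigma add b z u v) = Sigma_chain x y z u v.
Proof.
  apply pred_ext; intro w; split.
  - intros (be & be' & Hbe & Hbe' & Hx & Hy & (c & c' & Hc & Hc' & Hz & Hu & Hv)).
    exists be, be', c, (be' + c'); close_memberships.
  - intros (b1 & b2 & b3 & b4 & Hb1 & Hb2 & Hb3 & Hb4 & Hx & Hy & Hz & Hu & Hv).
    exists b1, b2; repeat split; try close_memberships.
    exists b3, (opp b2 + b4); close_memberships.
Qed.

Lemma Sigma_inner_m x y z u v :
  Sigma add b x (Sigma add b u z y) v = Sigma_chain x y z u v.
Proof.
  apply pred_ext; intro w; split.
  - intros (be & be' & Hbe & Hbe' & Hx & (c & c' & Hc & Hc' & Hu & Hz & Hy) & Hv).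
    exists be, (be' + be + c' + opp be), (be + c), be';
      close_memberships.
  - intros (b1 & b2 & b3 & b4 & Hb1 & Hb2 & Hb3 & Hb4 & Hx & Hy & Hz & Hu & Hv).
    exists b1, b4; repeat split; try close_memberships.
    exists (opp b1 + b3), (opp b1 + opp b4 + b2 + b1);
      close_memberships.
Qed.

Lemma Sigma_inner_l x y z u v :
  Sigma add b (Sigma add b x y z) u v = Sigma_chain x y z u v.
Proof.
  apply pred_ext; intro w; split.
  - intros (be & be' & Hbe & Hbe' & (c & c' & Hc & Hc' & Hx & Hy & Hz) & Hu & Hv).
    exists (be + c), (be + c' + opp be), be, be'; close_memberships.
  - intros (b1 & b2 & b3 & b4 & Hb1 & Hb2 & Hb3 & Hb4 & Hx & Hy & Hz & Hu & Hv).
    exists b3, b4; repeat split; try close_memberships.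
    exists (opp b3 + b1), (opp b3 + b2 + b3); close_memberships.
Qed.

Lemma Sigma_semitorsor S :
  (forall x y z, S x -> S y -> S z -> S (Sigma add b x y z)) ->
  semitorsor_on S (fun x y z => Sigma add b x y z).
Proof.
  intro S_closed; split; [exact S_closed|].
  intros; rewrite Sigma_inner_r, Sigma_inner_m, Sigma_inner_l; auto.
Qed.

Lemma Sigma_semitorsor_all : semitorsor_on (@allP G) (fun x y z => Sigma add b x y z).
Proof. now apply Sigma_semitorsor. Qed.

Lemma Sigma_semitorsor_Po : semitorsor_on (Po o) (fun x y z => Sigma add b x y z).
Proof.
  apply Sigma_semitorsor; unfold Po; intros x y z Hx Hy Hz.
  exists o, o; close_memberships.
Qed.

End GroupCompositions.

Section OppositeGroup.
Variables (G : Type) (add : G -> G -> G) (opp : G -> G) (o : G).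
Hypothesis HG : is_group add opp o.

Local Notation add_op := (fun p q => add q p).

Lemma is_group_op : is_group add_op opp o.
Proof. destruct HG; split; intros; auto. Qed.

Lemma is_subgroup_op a : is_subgroup add opp o a -> is_subgroup add_op opp o a.
Proof. intros []; split; auto. Qed.

Ltac reassociate H := apply (mem_eq H); first [ apply (grp_assoc HG)
                                               | symmetry; apply (grp_assoc HG) ].

Lemma Gammac_op a b :
  (fun x y z => Gammac add x a y b z) = (fun x y z => Gamma add_op x a y b z).
Proof.
  do 3 (apply functional_extensionality; intro).
  apply pred_ext; intro w.
  split; intros (p & q & Hp & Hq & Hy & Hz & Hx); exists p, q;
    repeat split; auto; reassociate Hy.
Qed.

Lemma Sigmac_op b :
  (fun x y z => Sigmac add b x y z) = (fun x y z => Sigma add_op b x y z).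
Proof.
  do 3 (apply functional_extensionality; intro).
  apply pred_ext; intro w.
  split; intros (p & q & Hp & Hq & Hx & Hy & Hz); exists p, q;
    repeat split; auto; reassociate Hy.
Qed.

End OppositeGroup.

Theorem theorem3p1 (G : Type) (add : G -> G -> G) (opp : G -> G) (o : G)
  (HG : is_group add opp o) (a b : G -> Prop)
  (Ha : is_subgroup add opp o a) (Hb : is_subgroup add opp o b) :
  (semitorsor_on (@allP G) (fun x y z => Gamma add x a y b z) /\
   semitorsor_on (Po o) (fun x y z => Gamma add x a y b z)) /\
  (semitorsor_on (@allP G) (fun x y z => Gammac add x a y b z) /\
   semitorsor_on (Po o) (fun x y z => Gammac add x a y b z)) /\
  (semitorsor_on (@allP G) (fun x y z => Sigma add b x y z) /\
   semitorsor_on (Po o) (fun x y z => Sigma add b x y z)) /\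
  (semitorsor_on (@allP G) (fun x y z => Sigmac add b x y z) /\
   semitorsor_on (Po o) (fun x y z => Sigmac add b x y z)).
Proof.
  pose proof (is_group_op HG) as HG_op.
  pose proof (is_subgroup_op Ha) as Ha_op.
  pose proof (is_subgroup_op Hb) as Hb_op.
  rewrite (Gammac_op HG a b), (Sigmac_op HG b).
  exact (conj (conj (Gamma_semitorsor_all HG Ha Hb) (Gamma_semitorsor_Po HG Ha Hb))
    (conj (conj (Gamma_semitorsor_all HG_op Ha_op Hb_op)
                (Gamma_semitorsor_Po HG_op Ha_op Hb_op))
    (conj (conj (Sigma_semitorsor_all HG Hb) (Sigma_semitorsor_Po HG Hb))
          (conj (Sigma_semitorsor_all HG_op Hb_op) (Sigma_semitorsor_Po HG_op Hb_op))))).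
Qed.
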